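(* Let $\mathbf u:[0,\infty)\to(0,\infty)^N$ be a differentiable solution of the flux-differencing scheme $$\frac{du_i}{dt}=-2\sum_{j=1}^N D_{ij}\,F^\star(u_i,u_j),\qquad i=1,\dots,N.$$ (i) If $F^\star=F^\star_{\mathrm{geom}}$, then $\mathcal S(\mathbf u)=-2\sum_i H_{ii}\sqrt{u_i/a_i}$ is constant in time. (ii) If $F^\star=F^\star_{\log}$, then $\mathcal S(\mathbf u)=\sum_i H_{ii}\big(u_i\log(a_iu_i)-u_i\big)$ is constant in time.
   Context: $N\ge2$; $H=\operatorname{diag}(H_{ii})$ with $H_{ii}>0$; $Q\in\mathbb R^{N\times N}$ with $Q+Q^T=0$ and $Q\mathbf 1=\mathbf 0$ ($\mathbf 1$ the vector of ones); $D=H^{-1}Q$. Coefficients $a_i>0$ are fixed (time independent). Two-point fluxes: geometric $F^\star_{\mathrm{geom}}(u_i,u_j)=\sqrt{a_iu_i\,a_ju_j}$; logarithmic $F^\star_{\log}(u_i,u_j)=\dfrac{a_ju_j-a_iu_i}{\log(a_ju_j)-\log(a_iu_i)}$, with the value $a_iu_i$ when $a_iu_i=a_ju_j$. *)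

From HB Require Import structures.
From mathcomp Require Import all_boot all_order all_algebra.
From mathcomp Require Import all_classical all_reals all_analysis.
Set Implicit Arguments. Unset Strict Implicit. Unset Printing Implicit Defensive.
Import Order.TTheory GRing.Theory Num.Theory.
Import numFieldNormedType.Exports.
Local Open Scope ring_scope.

Section Defs.
Variables (R : realType) (N : nat).

Definition Hmx (h : 'rV[R]_N) : 'M[R]_N := diag_mx h.
Definition Dmx (h : 'rV[R]_N) (Q : 'M[R]_N) : 'M[R]_N := invmx (Hmx h) *m Q.

Definition Fgeom (a : 'I_N -> R) (i j : 'I_N) (x y : R) : R :=
  Num.sqrt (a i * x * (a j * y)).

Definition Flog (a : 'I_N -> R) (i j : 'I_N) (x y : R) : R :=
  if a i * x == a j * y then a i * x
  else (a j * y - a i * x) / (ln (a j * y) - ln (a i * x)).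

Definition solves (h : 'rV[R]_N) (Q : 'M[R]_N)
    (F : 'I_N -> 'I_N -> R -> R -> R) (u : R -> 'I_N -> R) : Prop :=
  (forall t : R, 0 <= t -> forall i, 0 < u t i) /\
  (forall i, ({within `[0, +oo[, continuous (fun s : R => u s i)})%classic) /\
  (forall t : R, 0 < t -> forall i : 'I_N,
     is_derive t (1 : R) (fun s : R => u s i)
       (-2 * \sum_(j < N) Dmx h Q i j * F i j (u t i) (u t j))).

Definition S_geom (h : 'rV[R]_N) (a : 'I_N -> R) (v : 'I_N -> R) : R :=
  -2 * \sum_(i < N) h 0 i * Num.sqrt (v i / a i).

Definition S_log (h : 'rV[R]_N) (a : 'I_N -> R) (v : 'I_N -> R) : R :=
  \sum_(i < N) h 0 i * (v i * ln (a i * v i) - v i).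

End Defs.

(* Both entropies are separable, S(u) = sum_i eta_i(u_i) with eta_i' = H_ii v_i, and both
   fluxes are entropy conservative in Tadmor's sense: F(u_i,u_j) (v_i - v_j) = psi_i - psi_j
   for a potential psi (psi_i = sqrt(a_i u_i) for the geometric flux with v_i = -1/sqrt(a_i u_i),
   psi_i = a_i u_i for the logarithmic flux with v_i = log(a_i u_i)).  Since H D = Q,
   dS/dt = -2 sum_ij Q_ij F_ij v_i; symmetrising with Q^T = -Q turns this into
   -sum_ij Q_ij (psi_i - psi_j), which vanishes because Q has zero row and column sums.
   The mean value theorem then makes S constant. *)
From HB Require Import structures.
From mathcomp Require Import all_boot all_order all_algebra.
From mathcomp Require Import all_classical all_reals all_analysis.
From mathcomp Require Import ring lra.
Import Order.TTheory GRing.Theory Num.Theory.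
Import numFieldNormedType.Exports.
Local Open Scope ring_scope.

Section ConstancyOnHalfLine.
Context {R : realType}.

Lemma is_derive_continuous (f : R -> R) (x df : R) :
  is_derive x 1 f df -> {for x, continuous f}.
Proof. by move=> [fx _]; apply/differentiable_continuous/derivable1_diffP. Qed.

Lemma is_derive0_itvcc_cst {g : R -> R} {t : R} : 0 <= t ->
  {within `[0, t], continuous g}%classic ->
  (forall x : R, 0 < x -> is_derive x 1 g 0) -> g t = g 0.
Proof.
rewrite le0r => /orP[/eqP -> // | t_gt0] gc gd.
have [c _ /eqP] := MVT t_gt0 (fun (x : R) x0t => gd x (andP (x0t : x \in `]0, t[)).1) gc.
by rewrite mul0r subr_eq0 => /eqP.
Qed.

Context {N : nat} {u : R -> 'I_N -> R} {eta : 'I_N -> R -> R}.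
Hypothesis u_gt0 : forall s, 0 <= s -> forall i, 0 < u s i.
Hypothesis u_cont : forall i, {within `[0, +oo[, continuous (fun s => u s i)}%classic.
Hypothesis eta_cont : forall i y, 0 < y -> {for y, continuous (eta i)}.

Lemma continuous_sum_comp (t : R) :
  {within `[0, t], continuous (fun s => \sum_(i < N) eta i (u s i))}%classic.
Proof.
apply/subspace_continuousP => x x0t; apply: cvg_big; first exact: add_continuous.
move=> i _.
have /subspace_continuousP /(_ x x0t) ui : {within `[0, t], continuous (u^~ i)}%classic.
  by apply: continuous_subspaceW (u_cont i) => y /=; rewrite !in_itv /= => /andP[->].
apply: (cvg_comp _ _ ui); apply/eta_cont/u_gt0.
by move: x0t; rewrite /= in_itv /= => /andP[].
Qed.

End ConstancyOnHalfLine.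

Lemma sum_comp_cst {R : realType} {N : nat} {u du : R -> 'I_N -> R}
    {eta deta : 'I_N -> R -> R} :
  (forall s : R, 0 <= s -> forall i, 0 < u s i) ->
  (forall i, {within `[0, +oo[, continuous (fun s => u s i)}%classic) ->
  (forall t : R, 0 < t -> forall i, is_derive t 1 (fun s => u s i) (du t i)) ->
  (forall i (y : R), 0 < y -> is_derive y 1 (eta i) (deta i y)) ->
  (forall t : R, 0 < t -> \sum_(i < N) deta i (u t i) * du t i = 0) ->
  forall t : R, 0 <= t -> \sum_(i < N) eta i (u t i) = \sum_(i < N) eta i (u 0 i).
Proof.
move=> u_gt0 u_cont u_der eta_der dS0 t t_ge0.
apply: (is_derive0_itvcc_cst (g := fun s => \sum_(i < N) eta i (u s i)) t_ge0).
  apply: continuous_sum_comp => // i y y_gt0.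
  exact: is_derive_continuous (eta_der i y y_gt0).
move=> x x_gt0.
have dS : is_derive x 1 (\sum_(i < N) (eta i \o u^~ i))
    (\sum_(i < N) deta i (u x i) * du x i).
  apply: is_derive_sum => i; apply: is_derive1_comp; last exact: u_der.
  exact/eta_der/u_gt0/ltW.
by rewrite fct_sumE in dS; exact: is_derive_eq dS (dS0 x x_gt0).
Qed.

Section SkewSummationByParts.
Context {R : realType} {N : nat} {Q : 'M[R]_N}.
Hypothesis Q_skew : Q + Q^T = 0.
Hypothesis Q_row0 : Q *m const_mx 1 = 0 :> 'cV[R]_N.

Lemma skew_mxE i j : Q j i = - Q i j.
Proof.
have /eqP := congr1 (fun M : 'M[R]_N => M i j) Q_skew.
by rewrite !mxE addrC addr_eq0 => /eqP.
Qed.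

Lemma row_sum_eq0 i : \sum_j Q i j = 0.
Proof.
have := congr1 (fun M : 'cV[R]_N => M i 0) Q_row0; rewrite !mxE => row_i.
by rewrite -[RHS]row_i; apply: eq_bigr => j _; rewrite mxE mulr1.
Qed.

Lemma col_sum_eq0 j : \sum_i Q i j = 0.
Proof.
by rewrite (eq_bigr (fun i => - Q j i)) ?sumrN ?row_sum_eq0 ?oppr0 // => i _;
  rewrite skew_mxE.
Qed.

Lemma sum_flux_eq0 {F : 'I_N -> 'I_N -> R} {v psi : 'I_N -> R} :
  (forall i j, F i j = F j i) ->
  (forall i j, F i j * (v i - v j) = psi i - psi j) ->
  \sum_i \sum_j Q i j * F i j * v i = 0.
Proof.
move=> F_sym F_cons; set T := \sum_i _.
have T_swap : T = - \sum_i \sum_j Q i j * F i j * v j.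
  rewrite /T exchange_big /= -sumrN; apply: eq_bigr => i _.
  by rewrite -sumrN; apply: eq_bigr => j _; rewrite skew_mxE F_sym; ring.
suff : T + T = 0 by lra.
rewrite {2}T_swap /T -sumrB.
under eq_bigr => i _ do rewrite -sumrB.
under eq_bigr => i _ do under eq_bigr => j _ do
  rewrite -mulrBr -mulrA F_cons mulrBr.
under eq_bigr => i _ do rewrite sumrB -mulr_suml row_sum_eq0 mul0r sub0r.
by rewrite sumrN exchange_big /= big1 ?oppr0 // => j _;
  rewrite -mulr_suml col_sum_eq0 mul0r.
Qed.

End SkewSummationByParts.

Lemma Hmx_mul_DmxE {R : realType} {N : nat} {h : 'rV[R]_N} (Q : 'M[R]_N) i j :
  (forall k, 0 < h 0 k) -> h 0 i * Dmx h Q i j = Q i j.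
Proof.
move=> h_gt0; have H_unit : Hmx h \in unitmx.
  by rewrite unitmxE /Hmx det_diag unitfE; apply/lt0r_neq0/prodr_gt0 => k _.
have : Hmx h *m Dmx h Q = Q by rewrite /Dmx mulmxA mulmxV // mul1mx.
by move=> {2}<-; rewrite /Hmx mul_diag_mx [RHS]mxE.
Qed.

Section EntropyConservation.
Context {R : realType} {N : nat} {h : 'rV[R]_N} {Q : 'M[R]_N}.
Context {F : 'I_N -> 'I_N -> R -> R -> R} {eta v psi : 'I_N -> R -> R}.
Hypothesis h_gt0 : forall i, 0 < h 0 i.
Hypothesis Q_skew : Q + Q^T = 0.
Hypothesis Q_row0 : Q *m const_mx 1 = 0 :> 'cV[R]_N.
Hypothesis F_sym : forall i j (x y : R), 0 < x -> 0 < y -> F i j x y = F j i y x.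
Hypothesis F_conservative : forall i j (x y : R), 0 < x -> 0 < y ->
  F i j x y * (v i x - v j y) = psi i x - psi j y.
Hypothesis eta_derive : forall i (y : R), 0 < y -> is_derive y 1 (eta i) (h 0 i * v i y).

Lemma solves_entropy_cst (u : R -> 'I_N -> R) : solves h Q F u ->
  forall t : R, 0 <= t -> \sum_i eta i (u t i) = \sum_i eta i (u 0 i).
Proof.
move=> [u_gt0 [u_cont u_der]].
apply: (sum_comp_cst (deta := fun i y => h 0 i * v i y) u_gt0 u_cont u_der eta_derive).
move=> s s_gt0.
have us_gt0 k : 0 < u s k by exact/u_gt0/ltW.
have flux0 := sum_flux_eq0 Q_skew Q_row0
  (fun i j => F_sym i j _ _ (us_gt0 i) (us_gt0 j))
  (fun i j => F_conservative i j _ _ (us_gt0 i) (us_gt0 j)).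
rewrite -[RHS](mulr0 (-2)) -[X in -2 * X]flux0 mulr_sumr; apply: eq_bigr => i _.
rewrite mulrCA !mulr_sumr; apply: eq_bigr => j _.
by rewrite -(Hmx_mul_DmxE Q i j h_gt0); ring.
Qed.

End EntropyConservation.

Section Fluxes.
Context {R : realType} {N : nat} {a : 'I_N -> R}.
Hypothesis a_gt0 : forall i, 0 < a i.

Lemma Fgeom_sym i j x y : Fgeom a i j x y = Fgeom a j i y x.
Proof. by rewrite /Fgeom mulrC. Qed.

Lemma Fgeom_conservative i j x y : 0 < x -> 0 < y ->
  Fgeom a i j x y * (- (Num.sqrt (a i * x))^-1 + (Num.sqrt (a j * y))^-1) =
  Num.sqrt (a i * x) - Num.sqrt (a j * y).
Proof.
move=> x_gt0 y_gt0; rewrite /Fgeom sqrtrM ?mulr_ge0 ?ltW //.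
have wi : Num.sqrt (a i * x) != 0 by rewrite gt_eqF // sqrtr_gt0 mulr_gt0.
have wj : Num.sqrt (a j * y) != 0 by rewrite gt_eqF // sqrtr_gt0 mulr_gt0.
by field; apply/andP.
Qed.

Lemma Flog_sym i j x y : Flog a i j x y = Flog a j i y x.
Proof.
rewrite /Flog; case: (eqVneq (a i * x) (a j * y)) => [-> // | _].
by rewrite -[a i * x - _]opprB -[ln (a i * x) - _]opprB invrN mulrNN.
Qed.

Lemma Flog_conservative i j x y : 0 < x -> 0 < y ->
  Flog a i j x y * (ln (a i * x) - ln (a j * y)) = a i * x - a j * y.
Proof.
move=> x_gt0 y_gt0; rewrite /Flog; case: eqP => [-> | ne]; first by rewrite !subrr mulr0.
have lnD : ln (a j * y) - ln (a i * x) != 0.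
  rewrite subr_eq0; apply/eqP => /ln_inj E; apply: ne; symmetry.
  by apply: E; rewrite posrE mulr_gt0.
by field.
Qed.

Lemma is_derive_geom_entropy (c : R) i (y : R) : 0 < y ->
  is_derive y 1 (fun z => -2 * (c * Num.sqrt (z / a i)))
    (c * - (Num.sqrt (a i * y))^-1).
Proof.
move=> y_gt0; have ya_gt0 : 0 < y / a i by rewrite divr_gt0.
have sqrt_ay : Num.sqrt (a i * y) = a i * Num.sqrt (y / a i).
  have -> : a i * y = a i ^+ 2 * (y / a i) by field; rewrite gt_eqF.
  by rewrite sqrtrM ?sqr_ge0 // sqrtr_sqr gtr0_norm.
have dq := is_deriveM (is_derive_id y 1) (is_derive_cst (a i)^-1 y 1).
have ds := is_deriveM (is_derive_cst (-2 * c) y 1)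
  (is_derive1_comp (g := id * cst (a i)^-1) (is_derive1_sqrt ya_gt0) dq).
have -> : (fun z => -2 * (c * Num.sqrt (z / a i))) =
    cst (-2 * c) * (Num.sqrt \o (id * cst (a i)^-1)).
  by apply/funext => z /=; rewrite mulrA.
apply: is_derive_eq ds _; rewrite /GRing.scale /= sqrt_ay !mulr0 add0r addr0.
have sqrt_neq0 : Num.sqrt (y / a i) != 0 by rewrite gt_eqF // sqrtr_gt0.
by field; rewrite sqrt_neq0 gt_eqF.
Qed.

Lemma is_derive_log_entropy (c : R) i (y : R) : 0 < y ->
  is_derive y 1 (fun z => c * (z * ln (a i * z) - z)) (c * ln (a i * y)).
Proof.
move=> y_gt0; have ay_gt0 : 0 < a i * y by rewrite mulr_gt0.
have dl := is_derive1_comp (is_derive1_ln ay_gt0)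
  (is_deriveM (is_derive_cst (a i) y 1) (is_derive_id y 1)).
have ds := is_deriveM (is_derive_cst c y 1)
  (is_deriveB (is_deriveM (is_derive_id y 1) dl) (is_derive_id y 1)).
apply: is_derive_eq ds _; rewrite /GRing.scale /=.
by rewrite !mulr0 !addr0; field; rewrite !gt_eqF.
Qed.

Variables (h : 'rV[R]_N) (Q : 'M[R]_N).
Hypothesis h_gt0 : forall i, 0 < h 0 i.
Hypothesis Q_skew : Q + Q^T = 0.
Hypothesis Q_row0 : Q *m const_mx 1 = 0 :> 'cV[R]_N.

Lemma solves_S_geom_cst (u : R -> 'I_N -> R) : solves h Q (Fgeom a) u ->
  forall t, 0 <= t -> S_geom h a (u t) = S_geom h a (u 0).
Proof.
move=> u_sol t t_ge0; rewrite /S_geom !mulr_sumr.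
have F_cons i j (x y : R) : 0 < x -> 0 < y ->
    Fgeom a i j x y * (- (Num.sqrt (a i * x))^-1 - - (Num.sqrt (a j * y))^-1) =
    Num.sqrt (a i * x) - Num.sqrt (a j * y).
  by rewrite opprK; exact: Fgeom_conservative.
have eta_der i (y : R) : 0 < y ->
    is_derive y 1 (fun z => -2 * (h 0 i * Num.sqrt (z / a i)))
      (h 0 i * - (Num.sqrt (a i * y))^-1).
  exact: is_derive_geom_entropy.
exact: (solves_entropy_cst h_gt0 Q_skew Q_row0
  (fun i j x y _ _ => Fgeom_sym i j x y) F_cons eta_der u u_sol t t_ge0).
Qed.

Lemma solves_S_log_cst (u : R -> 'I_N -> R) : solves h Q (Flog a) u ->
  forall t, 0 <= t -> S_log h a (u t) = S_log h a (u 0).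
Proof.
move=> u_sol t t_ge0; rewrite /S_log.
have eta_der i (y : R) : 0 < y ->
    is_derive y 1 (fun z => h 0 i * (z * ln (a i * z) - z)) (h 0 i * ln (a i * y)).
  exact: is_derive_log_entropy.
exact: (solves_entropy_cst h_gt0 Q_skew Q_row0 (fun i j x y _ _ => Flog_sym i j x y)
  Flog_conservative eta_der u u_sol t t_ge0).
Qed.

End Fluxes.

Theorem mainTheorem2 (R : realType) (N : nat) (h : 'rV[R]_N) (Q : 'M[R]_N)
    (a : 'I_N -> R) :
  (2 <= N)%N ->
  (forall i, 0 < h 0 i) ->
  Q + Q^T = 0 ->
  Q *m const_mx 1 = 0 :> 'cV[R]_N ->
  (forall i, 0 < a i) ->
  (forall u : R -> 'I_N -> R, solves h Q (Fgeom a) u ->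
     forall t, 0 <= t -> S_geom h a (u t) = S_geom h a (u 0)) /\
  (forall u : R -> 'I_N -> R, solves h Q (Flog a) u ->
     forall t, 0 <= t -> S_log h a (u t) = S_log h a (u 0)).
Proof.
move=> _ h_gt0 Q_skew Q_row0 a_gt0; split.
- exact: solves_S_geom_cst.
- exact: solves_S_log_cst.
Qed.
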